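(* Let $p>3$ be a prime, $q=p^h$, and $a,b\in\mathbb{F}_{q^2}^*$. Then $\deg\gcd\bigl(N_{a,b}(X),D_{a,b}(X)\bigr)=2$ if and only if $b=v/a^2$ for some $v\in\mathbb{F}_q^*$ satisfying $v^2-a^{q+1}v-a^{3q+3}=0$. In this case the common factor is (up to a scalar) $bX^2-a^qX-a^{q+1}+b^{q+1}$.
   Context: $N_{a,b}(X)=a^qX^3+X^2+b^q$ and $D_{a,b}(X)=bX^3+X+a$, polynomials in $\mathbb{F}_{q^2}[X]$; gcd means the monic greatest common divisor in $\mathbb{F}_{q^2}[X]$. *)

From HB Require Import structures.
From mathcomp Require Import all_boot all_order all_algebra all_field.
Set Implicit Arguments. Unset Strict Implicit. Unset Printing Implicit Defensive.
Import GRing.Theory.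
Local Open Scope ring_scope.

Definition Npoly (F : fieldType) (q : nat) (a b : F) : {poly F} :=
  (a ^+ q) *: 'X^3 + 'X^2 + (b ^+ q)%:P.
Definition Dpoly (F : fieldType) (a b : F) : {poly F} :=
  b *: 'X^3 + 'X + a%:P.

From HB Require Import structures.
From mathcomp Require Import all_boot all_order all_algebra all_field.
From mathcomp Require Import ring.
Import GRing.Theory.
Local Open Scope ring_scope.

(* Write x = a^q, y = b^q.  The quadratic Q = b X^2 - x X + (b y - a x) equals
   b N - x D, so gcd(N, D) divides Q and has degree 2 exactly when Q divides D.
   Dividing b D by Q leaves a linear remainder, whose two coefficients vanish iff
   u = a^2 b satisfies u^q = x^2 y = u and u^2 - a^(q+1) u - a^(3q+3) = 0. *)

Lemma eqp_gcdp_lincomb (F : fieldType) (p r : {poly F}) (c d : F) :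
  c != 0 -> (gcdp p r %= c *: p - d *: r) = (c *: p - d *: r %| r).
Proof.
move=> cn0; set s := c *: p - d *: r.
apply/idP/idP => [gs | sr]; first by rewrite -(eqp_dvdl r gs) dvdp_gcdr.
have sp : s %| p.
  have -> : p = c^-1 *: (s + d *: r) by rewrite /s subrK scalerA mulVf ?scale1r.
  by rewrite dvdpZr ?invr_eq0 // dvdp_add ?dvdpp // -mul_polyC dvdp_mull.
by rewrite /eqp dvdp_gcd sp sr /s -!mul_polyC dvdp_sub ?dvdp_mull ?dvdp_gcdl ?dvdp_gcdr.
Qed.

Lemma dvdp_remainder (F : fieldType) (s r m t : {poly F}) (c : F) :
  c != 0 -> c *: r = m * s + t -> (size t < size s)%N -> (s %| r) = (t == 0).
Proof.
by move=> cn0 Er st; rewrite -(dvdpZr s r cn0) /dvdp Er modp_addl_mul_small.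
Qed.

Lemma lin_poly_eq0 (R : nzRingType) (c1 c0 : R) :
  (c1%:P * 'X + c0%:P == 0) = (c1 == 0) && (c0 == 0).
Proof.
apply/eqP/andP => [E | [/eqP-> /eqP->]]; last by rewrite mul0r add0r.
have := congr1 (coefp 1) E; have := congr1 (coefp 0) E.
by rewrite /= !coefD !coefCM !coefX !coefC /= mulr0 mulr1 !addr0 add0r => -> ->.
Qed.

Section CommonQuadraticFactor.

Context {F : fieldType} {a b x y : F}.
Hypotheses (an0 : a != 0) (bn0 : b != 0) (xn0 : x != 0).

Let N : {poly F} := x *: 'X^3 + 'X^2 + y%:P.
Let Q : {poly F} := b *: 'X^2 - x *: 'X + (b * y - a * x)%:P.
Let r1 := b - (b * y - a * x) * b + x ^+ 2.
Let r0 := a * b - (b * y - a * x) * x.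

Lemma size_common_quadratic : size Q = 3%N.
Proof.
have -> : Q = (b%:P * 'X + (- x)%:P) * 'X + (b * y - a * x)%:P.
  by rewrite /Q -!mul_polyC polyCN; ring.
have lin2 : size (b%:P * 'X + (- x)%:P) = 2.
  by rewrite size_MXaddC polyC_eq0 (negbTE bn0) size_polyC bn0.
by rewrite size_MXaddC lin2 -size_poly_eq0 lin2.
Qed.

Lemma common_quadratic_lincomb : Q = b *: N - x *: Dpoly a b.
Proof. by rewrite /Q /N /Dpoly -!mul_polyC polyCB !polyCM; ring. Qed.

Lemma DpolyZ_divmod_common_quadratic :
  b *: Dpoly a b = (b%:P * 'X + x%:P) * Q + (r1%:P * 'X + r0%:P).
Proof.
by rewrite /Q /Dpoly /r1 /r0 -!mul_polyC !(polyCD, polyCN, polyCM, rmorphXn); ring.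
Qed.

Lemma gcdp_size3_eqp :
  (size (gcdp N (Dpoly a b)) == 3%N) = (gcdp N (Dpoly a b) %= Q).
Proof.
rewrite -size_common_quadratic dvdp_size_eqp // common_quadratic_lincomb.
by rewrite -!mul_polyC dvdp_sub ?dvdp_mull ?dvdp_gcdl ?dvdp_gcdr.
Qed.

Lemma gcdp_size3_remainders :
  (size (gcdp N (Dpoly a b)) == 3%N) = (r1 == 0) && (r0 == 0).
Proof.
rewrite gcdp_size3_eqp common_quadratic_lincomb eqp_gcdp_lincomb //.
rewrite -common_quadratic_lincomb -lin_poly_eq0.
apply: dvdp_remainder bn0 DpolyZ_divmod_common_quadratic _.
rewrite size_common_quadratic size_MXaddC.
by case: ifP => // _; rewrite size_polyC; case: (r1 != 0).
Qed.

Lemma remainders_eq0 :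
  (r1 == 0) && (r0 == 0) =
  (x ^+ 2 * y == a ^+ 2 * b) &&
  ((a ^+ 2 * b) ^+ 2 - a * x * (a ^+ 2 * b) - (a * x) ^+ 3 == 0).
Proof.
set u := a ^+ 2 * b; set w := a * x; set t := x ^+ 2 * y.
have un0 : u != 0 by rewrite mulf_neq0 ?expf_neq0.
have wn0 : w != 0 by rewrite mulf_neq0.
have c0n0 : - (a ^+ 2 * x) != 0 by rewrite oppr_eq0 mulf_neq0 ?expf_neq0.
have c1n0 : - (x ^+ 2 * a ^+ 4) != 0 by rewrite oppr_eq0 mulf_neq0 ?expf_neq0.
(* Scaled by these units, the remainders become polynomials in u, w and t. *)
have I0 : - (a ^+ 2 * x) * r0 = u * t - w * u - w ^+ 3 by rewrite /r0 /u /w /t; ring.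
have I1 : - (x ^+ 2 * a ^+ 4) * r1 = t * u ^+ 2 - w ^+ 4 - w ^+ 2 * u - w ^+ 3 * u.
  by rewrite /r1 /u /w /t; ring.
have -> : (r0 == 0) = (u * t - w * u - w ^+ 3 == 0).
  by rewrite -I0 mulf_eq0 (negbTE c0n0).
have -> : (r1 == 0) = (t * u ^+ 2 - w ^+ 4 - w ^+ 2 * u - w ^+ 3 * u == 0).
  by rewrite -I1 mulf_eq0 (negbTE c1n0).
apply/andP/andP => [[/eqP E1 /eqP E0] | [/eqP -> /eqP cubic]].
- have cubic : u ^+ 2 - w * u - w ^+ 3 = 0.
    apply: (mulfI wn0); rewrite mulr0.
    transitivity ((t * u ^+ 2 - w ^+ 4 - w ^+ 2 * u - w ^+ 3 * u)
                  - u * (u * t - w * u - w ^+ 3)); first ring.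
    by rewrite E0 E1 mulr0 subr0.
  split; last by rewrite cubic.
  rewrite -subr_eq0; apply/eqP; apply: (mulfI un0); rewrite mulr0.
  transitivity ((u * t - w * u - w ^+ 3) - (u ^+ 2 - w * u - w ^+ 3)); first ring.
  by rewrite E0 cubic subr0.
- split; apply/eqP; last by rewrite -cubic; ring.
  transitivity ((u + w) * (u ^+ 2 - w * u - w ^+ 3)); first ring.
  by rewrite cubic mulr0.
Qed.

End CommonQuadraticFactor.

Theorem mainTheorem4 (p h : nat) (F : finFieldType) (a b : F) :
  prime p -> (3 < p)%N -> (0 < h)%N -> #|F| = ((p ^ h) ^ 2)%N ->
  a != 0 -> b != 0 ->
  let q := (p ^ h)%N in
  ((size (gcdp (Npoly q a b) (Dpoly a b)) = 3%N) <->
     (exists v : F, [/\ v ^+ q = v, v != 0,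
        v ^+ 2 - a ^+ q.+1 * v - a ^+ (3 * q + 3) = 0 & b = v / a ^+ 2]))
  /\
  (size (gcdp (Npoly q a b) (Dpoly a b)) = 3%N ->
     gcdp (Npoly q a b) (Dpoly a b) %=
       b *: 'X^2 - (a ^+ q) *: 'X + (b ^+ q.+1 - a ^+ q.+1)%:P).
Proof.
move=> _ _ _ _ an0 bn0 q.
have xn0 : a ^+ q != 0 by rewrite expf_neq0.
have Euq : (a ^+ 2 * b) ^+ q = (a ^+ q) ^+ 2 * b ^+ q by rewrite exprMn exprAC.
have Aq1 : a ^+ q.+1 = a * a ^+ q by rewrite exprS.
have A3q3 : a ^+ (3 * q + 3) = (a * a ^+ q) ^+ 3.
  by rewrite -Aq1 -exprM mulnC mulSn addnC.
split; last first.
  by move/eqP; rewrite (gcdp_size3_eqp bn0) [b ^+ q.+1]exprS Aq1.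
split=> [/eqP | [v [vq vn0 cubic Eb]]].
  rewrite (gcdp_size3_remainders bn0) remainders_eq0 //.
  case/andP=> /eqP Eu /eqP cubic; exists (a ^+ 2 * b); split.
  - by rewrite Euq Eu.
  - by rewrite mulf_neq0 ?expf_neq0.
  - by rewrite Aq1 A3q3.
  - by rewrite mulrC mulKf ?expf_neq0.
have Eu : a ^+ 2 * b = v by rewrite Eb mulrC divfK ?expf_neq0.
apply/eqP; rewrite (gcdp_size3_remainders bn0) remainders_eq0 //.
by rewrite -Euq Eu vq eqxx -A3q3 -Aq1 cubic eqxx.
Qed.
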